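(* Let $G=(C,D,E)$ be a finite bipartite graph with left vertex set $C$, right vertex set $D$, and edge set $E\subseteq C\times D$. Then there exist $a,b\in\mathbb{N}$ with $b\le a$ such that $G$ is isomorphic to an induced subgraph of $B_{a,b}$.
   Context: For $n\in\mathbb{N}$, $[n]=\{1,\dots,n\}$, and for a set $X$, $\binom{X}{k}$ denotes the set of $k$-element subsets of $X$. For $k\le n$, $B_{n,k}$ is the bipartite graph with left vertex set $[n]$, right vertex set $\binom{[n]}{k}$, and edge set $\{(x,X)\in[n]\times\binom{[n]}{k} : x\in X\}$. For a graph $H=(V,E)$ and $V'\subseteq V$, the induced subgraph on $V'$ has vertex set $V'$ and edge set consisting of all edges of $H$ with both endpoints in $V'$. *)

From mathcomp Require Import all_boot.
Set Implicit Arguments. Unset Strict Implicit. Unset Printing Implicit Defensive.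

(* The set [n] = {1,...,n} is represented by 'I_n = {0,...,n-1}
   (shift by one; irrelevant for the statement). *)

Definition ksubset (n k : nat) := {X : {set 'I_n} | #|X| == k}.

Definition B_edge (n k : nat) (x : 'I_n) (X : ksubset n k) : bool :=
  x \in val X.

(* G = (C,D,E) is isomorphic (as a bipartite graph, left side to left side,
   right side to right side) to the subgraph of B_{n,k} induced on the
   vertex set L ∪ R with L ⊆ [n], R ⊆ binom([n],k):
   there are bijections f : C -> L and g : D -> R such that
   (c,d) ∈ E  <->  (f c, g d) is an edge of B_{n,k}.
   (The induced subgraph on L ∪ R has exactly the B-edges between L and R,
   since B_{n,k} has no edges inside either side.) *)
Definition iso_to_induced_sub_B (C D : finType) (E : C -> D -> bool)
    (n k : nat) (L : {set 'I_n}) (R : {set ksubset n k}) : Prop :=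
  exists (f : C -> 'I_n) (g : D -> ksubset n k),
    [/\ injective f, f @: [set: C] = L,
        injective g, g @: [set: D] = R &
        forall c d, E c d = B_edge (f c) (g d)].

Definition is_induced_sub_B (C D : finType) (E : C -> D -> bool)
    (n k : nat) : Prop :=
  exists (L : {set 'I_n}) (R : {set ksubset n k}),
    iso_to_induced_sub_B E L R.

From mathcomp Require Import all_boot.

Set Implicit Arguments.
Unset Strict Implicit.
Unset Printing Implicit Defensive.

(* Encode a right vertex d by the set {(E c d, c) | c in C} ∪ {d} over the
   ground set (bool * C) + D, and a left vertex c by (true, c).  All these
   sets have |C| + 1 elements, (true, c) lies in the set of d exactly when
   E c d, and the tag d keeps vertices with equal neighbourhoods apart.
   Numbering the ground set then lands inside B_{n, |C|+1}. *)

Section InducedSubB.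
Variables (C D : finType) (E : C -> D -> bool).

Lemma is_induced_sub_B_of_set_system (V : finType) (n k : nat)
    (f : C -> V) (g : D -> {set V}) :
  #|V| <= n -> injective f -> injective g -> (forall d, #|g d| = k) ->
  (forall c d, E c d = (f c \in g d)) -> is_induced_sub_B E n k.
Proof.
move=> leVn f_inj g_inj card_g Efg.
pose h (v : V) : 'I_n := widen_ord leVn (enum_rank v).
have h_inj : injective h.
  by move=> u v /(congr1 val) eq_uv; apply/enum_rank_inj/val_inj.
have card_hg d : #|h @: g d| == k by rewrite card_imset // card_g.
pose g' d : ksubset n k := exist _ (h @: g d) (card_hg d).
exists ((h \o f) @: setT), (g' @: setT), (h \o f), g'; split=> //.
- exact: inj_comp.
- by move=> d1 d2 /(congr1 val) /(imset_inj h_inj) /g_inj.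
- by move=> c d; rewrite Efg /B_edge /= mem_imset.
Qed.

Definition signed_tag (d : D) (o : option C) : bool * C + D :=
  if o is Some c then inl (E c d, c) else inr d.

Definition signed_nbhd (d : D) : {set bool * C + D} := signed_tag d @: setT.

Lemma signed_tag_inj d : injective (signed_tag d).
Proof. by case=> [c1|] [c2|] //= [_ ->]. Qed.

Lemma card_signed_nbhd d : #|signed_nbhd d| = #|C|.+1.
Proof. by rewrite card_imset ?cardsT ?card_option //; apply: signed_tag_inj. Qed.

Lemma inr_mem_signed_nbhd d1 d2 : (inr d1 \in signed_nbhd d2) = (d1 == d2).
Proof.
apply/imsetP/eqP => [[[c|] _ //= [->]] // | ->].
by exists None.
Qed.

Lemma signed_nbhd_inj : injective signed_nbhd.
Proof.
move=> d1 d2 eq_nbhd; apply/eqP.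
by rewrite -inr_mem_signed_nbhd -eq_nbhd inr_mem_signed_nbhd.
Qed.

Lemma mem_signed_nbhd c d : (inl (true, c) \in signed_nbhd d) = E c d.
Proof.
apply/imsetP/idP => [[[c'|] _ //= [Ec'd ->]] // | Ecd].
by exists (Some c); rewrite //= Ecd.
Qed.

End InducedSubB.

Theorem mainTheorem5 (C D : finType) (E : C -> D -> bool) :
  exists a b : nat, b <= a /\ is_induced_sub_B E a b.
Proof.
(* The maxn only matters when D is empty: then no set of size |C| + 1 need fit. *)
exists (maxn #|{: bool * C + D}| #|C|.+1), #|C|.+1; split; first exact: leq_maxr.
apply: (is_induced_sub_B_of_set_system (f := fun c => inl (true, c))
          (g := signed_nbhd E)).
- exact: leq_maxl.
- by move=> c1 c2 [].
- exact: signed_nbhd_inj.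
- exact: card_signed_nbhd.
- by move=> c d; rewrite mem_signed_nbhd.
Qed.
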